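(* Let $m,n,w$ be positive integers with $w\le m$, and let $d=(n-1)w+r$ with $0<r\le w$. Then $A(m,n,w,d)\le B(m,w,r)$.
   Context: $J(m,w)$ denotes the set of binary vectors of length $m$ and Hamming weight $w$. Elements of $J(m,w)^n$ are identified with $m\times n$ binary matrices all of whose columns have weight $w$, with binary Hamming distance. $A(m,n,w,d)$ is the maximum cardinality of a nonempty subset of $J(m,w)^n$ with pairwise Hamming distances at least $2d$. $B(m,w,r)$ is the maximum cardinality of a nonempty subset of $J(m,w)$ with pairwise Hamming distances at least $2r$. *)

From mathcomp Require Import all_boot all_order all_algebra.
Set Implicit Arguments. Unset Strict Implicit. Unset Printing Implicit Defensive.

Definition hweight m (x : {ffun 'I_m -> bool}) : nat := #|[set i | x i]|.
Definition hdist m (x y : {ffun 'I_m -> bool}) : nat := #|[set i | x i != y i]|.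

Definition inJ m w (x : {ffun 'I_m -> bool}) : bool := hweight x == w.

(* Elements of J(m,w)^n are m x n binary matrices with all column weights w;
   distance is the binary Hamming distance on all m*n entries. *)
Definition colweight m n (M : 'M[bool]_(m, n)) (j : 'I_n) : nat :=
  #|[set i | M i j]|.
Definition inJn m n w (M : 'M[bool]_(m, n)) : bool :=
  [forall j, colweight M j == w].
Definition mdist m n (M N : 'M[bool]_(m, n)) : nat :=
  #|[set ij : 'I_m * 'I_n | M ij.1 ij.2 != N ij.1 ij.2]|.

Definition is_codeA m n w d (C : {set 'M[bool]_(m, n)}) : bool :=
  [&& C != set0,
      [forall M in C, inJn w M] &
      [forall M in C, forall N in C, (M != N) ==> (2 * d <= mdist M N)]].

Definition is_codeB m w r (C : {set {ffun 'I_m -> bool}}) : bool :=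
  [&& C != set0,
      [forall x in C, inJ w x] &
      [forall x in C, forall y in C, (x != y) ==> (2 * r <= hdist x y)]].

Definition A m n w d : nat := \max_(C : {set 'M[bool]_(m, n)} | is_codeA w d C) #|C|.
Definition B m w r : nat := \max_(C : {set {ffun 'I_m -> bool}} | is_codeB w r C) #|C|.

From mathcomp Require Import all_boot all_order all_algebra.
From mathcomp Require Import zify.
Set Implicit Arguments. Unset Strict Implicit. Unset Printing Implicit Defensive.

(* Projecting a code of J(m,w)^(n+1) onto its first column loses at most 2w
   of distance per dropped column, i.e. 2nw in total.  With minimum distance
   2d = 2nw + 2r the first columns of distinct codewords are therefore still
   at distance at least 2r > 0: the projection is injective and its image is
   a constant-weight code of J(m,w) with minimum distance 2r. *)

Definition colvec m n (M : 'M[bool]_(m, n)) (j : 'I_n) : {ffun 'I_m -> bool} :=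
  [ffun i => M i j].

Lemma hdistxx m (x : {ffun 'I_m -> bool}) : hdist x x = 0.
Proof. by apply/eqP; rewrite cards_eq0; apply/eqP/setP => i; rewrite !inE eqxx. Qed.

Lemma hdist_le_hweightD m (x y : {ffun 'I_m -> bool}) :
  hdist x y <= hweight x + hweight y.
Proof.
apply: leq_trans (leq_card_setU _ _); apply: subset_leq_card.
by apply/subsetP => i; rewrite !inE; case: (x i); case: (y i).
Qed.

Lemma hdist_inJ_le m w (x y : {ffun 'I_m -> bool}) :
  inJ w x -> inJ w y -> hdist x y <= 2 * w.
Proof.
move=> /eqP wx /eqP wy.
by apply: leq_trans (hdist_le_hweightD x y) _; rewrite wx wy mul2n addnn.
Qed.

Lemma inJ_colvec m n w (M : 'M[bool]_(m, n)) j : inJn w M -> inJ w (colvec M j).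
Proof.
move=> /forallP /(_ j) /eqP <-; apply/eqP.
by apply: eq_card => i; rewrite !inE ffunE.
Qed.

Lemma mdist_sum_colvec m n (M N : 'M[bool]_(m, n)) :
  mdist M N = \sum_(j < n) hdist (colvec M j) (colvec N j).
Proof.
rewrite /mdist -sum1_card.
transitivity (\sum_(j < n) \sum_(i in [set i | colvec M j i != colvec N j i]) 1).
  rewrite (exchange_big_dep xpredT) //= pair_big_dep /=.
  by apply: eq_bigl => -[i j]; rewrite !inE !ffunE.
by apply: eq_bigr => j _; rewrite sum1_card.
Qed.

Lemma mdist_le_col0 m n w (M N : 'M[bool]_(m, n.+1)) :
  inJn w M -> inJn w N ->
  mdist M N <= hdist (colvec M ord0) (colvec N ord0) + n * (2 * w).
Proof.
move=> wM wN; rewrite mdist_sum_colvec big_ord_recl leq_add2l.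
rewrite -[n in n * _]card_ord -sum_nat_const.
by apply: leq_sum => j _; apply: hdist_inJ_le; apply: inJ_colvec.
Qed.

Section FirstColumnProjection.

Variables (m n w r : nat) (C : {set 'M[bool]_(m, n.+1)}).
Hypothesis codeC : is_codeA w (n * w + r) C.

Let col0 (M : 'M[bool]_(m, n.+1)) := colvec M ord0.

Lemma hdist_col0_codeA M N :
  M \in C -> N \in C -> M != N -> 2 * r <= hdist (col0 M) (col0 N).
Proof.
case/and3P: codeC => _ /forall_inP wC /forall_inP dC MC NC MN.
have := implyP (forall_inP (dC M MC) N NC) MN.
have := mdist_le_col0 (wC M MC) (wC N NC).
rewrite /col0; lia.
Qed.

Lemma col0_inj : 0 < r -> {in C &, injective col0}.
Proof.
move=> r_gt0 M N MC NC col0MN; apply/eqP/negPn/negP => MN.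
by have := hdist_col0_codeA MC NC MN; rewrite col0MN hdistxx leqNgt muln_gt0 r_gt0.
Qed.

Lemma codeB_col0 : is_codeB w r (col0 @: C).
Proof.
case/and3P: codeC => /set0Pn [M MC] /forall_inP wC _.
apply/and3P; split.
- by apply/set0Pn; exists (col0 M); apply: imset_f.
- by apply/forall_inP => _ /imsetP [N NC ->]; apply: inJ_colvec (wC N NC).
- apply/forall_inP => _ /imsetP [N NC ->]; apply/forall_inP => _ /imsetP [P PC ->].
  by apply/implyP => NP; apply: hdist_col0_codeA => //; apply: contraNneq NP => ->.
Qed.

End FirstColumnProjection.

Theorem proposition9 (m n w r d : nat) :
  0 < m -> 0 < n -> 0 < w -> w <= m ->
  0 < r -> r <= w -> d = (n - 1) * w + r ->
  A m n w d <= B m w r.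
Proof.
move=> _ + _ _ r_gt0 _ ->; case: n => [//|n] _; rewrite subSS subn0.
apply/bigmax_leqP => C codeC.
rewrite -(card_in_imset (col0_inj codeC r_gt0)).
exact: leq_bigmax_cond (codeB_col0 codeC).
Qed.
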